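(* Assume $p_0,p_1>0$. For $t\in\mathbb{R}$ let $D_{n,-}(t)=\frac1{n_1}\sum_{j=1}^{n_1}I\big(\eta_1(X_{1,j})>\tfrac12+\tfrac{t}{2p_1}\big)-\frac1{n_0}\sum_{j=1}^{n_0}I\big(\eta_0(X_{0,j})\ge\tfrac12-\tfrac{t}{2p_0}\big)$ and $D_{n,+}(t)=\frac1{n_1}\sum_{j=1}^{n_1}I\big(\eta_1(X_{1,j})\ge\tfrac12+\tfrac{t}{2p_1}\big)-\frac1{n_0}\sum_{j=1}^{n_0}I\big(\eta_0(X_{0,j})>\tfrac12-\tfrac{t}{2p_0}\big)$. Then for every $t\in\mathbb{R}$ and $0<\epsilon\le\sqrt{(p_1\wedge p_0)/2}$, $$\max\Big\{P^{\otimes n}\big(|D_{n,+}(t)-D_+(t)|>\epsilon\big),\,P^{\otimes n}\big(|D_{n,-}(t)-D_-(t)|>\epsilon\big)\Big\}\le 8\exp\Big(-\frac{n(p_1\wedge p_0)\epsilon^2}{4}\Big).$$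
   Context: $(X,A,Y)$ is a random vector on $\mathbb{R}^d\times\{0,1\}\times\{0,1\}$ with law $P$; $p_a=P(A=a)$; $P_{X|A=a}$ the conditional law of $X$ given $A=a$; $\eta_a(x)=P(Y=1\mid A=a,X=x)$. $D_-(t)=P_{X|A=1}\big(\eta_1(X)>\tfrac12+\tfrac{t}{2p_1}\big)-P_{X|A=0}\big(\eta_0(X)\ge\tfrac12-\tfrac{t}{2p_0}\big)$ and $D_+(t)=P_{X|A=1}\big(\eta_1(X)\ge\tfrac12+\tfrac{t}{2p_1}\big)-P_{X|A=0}\big(\eta_0(X)>\tfrac12-\tfrac{t}{2p_0}\big)$. $\{(X_i,A_i,Y_i)\}_{i=1}^n$ is an i.i.d. sample from $P$, $n_a=\#\{i:A_i=a\}$, and $X_{a,1},\dots,X_{a,n_a}$ are the features of the observations with $A_i=a$; an empty average is interpreted as $0$. *)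

From HB Require Import structures.
From mathcomp Require Import all_boot all_order all_algebra.
From mathcomp Require Import all_classical all_reals all_analysis.
Set Implicit Arguments. Unset Strict Implicit. Unset Printing Implicit Defensive.
Import Order.TTheory GRing.Theory Num.Theory.
Local Open Scope classical_set_scope.
Local Open Scope ring_scope.

(* An observation (X, A, Y) lives in R^d x {0,1} x {0,1};
   R^d is d.-tuple R with the product (= Borel) sigma-algebra,
   {0,1} is bool (true = 1) with the discrete sigma-algebra. *)
Definition obs (R : realType) (d : nat) := ((d.-tuple R * bool) * bool)%type.

Definition feat {R : realType} {d : nat} (z : obs R d) : d.-tuple R := z.1.1.
Definition grp  {R : realType} {d : nat} (z : obs R d) : bool := z.1.2.
Definition lab  {R : realType} {d : nat} (z : obs R d) : bool := z.2.

Definition pA {R : realType} {d : nat} (P : probability (obs R d) R) (a : bool) : R :=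
  fine (P [set z | grp z = a]).

Definition PXgivenA {R : realType} {d : nat} (P : probability (obs R d) R)
  (a : bool) (E : set (d.-tuple R)) : R :=
  fine (P [set z | E (feat z) /\ grp z = a]) / pA P a.

Definition is_regression_fun {R : realType} {d : nat}
  (P : probability (obs R d) R) (eta : bool -> d.-tuple R -> R) : Prop :=
  forall a : bool,
    measurable_fun setT (eta a) /\
    (forall x, 0 <= eta a x <= 1) /\
    (forall B : set (d.-tuple R), measurable B ->
       P [set z | B (feat z) /\ grp z = a /\ lab z = true] =
       (\int[P]_(z in [set z | B (feat z) /\ grp z = a]) (eta a (feat z))%:E)%E).

Definition Dminus {R : realType} {d : nat} (P : probability (obs R d) R)
  (eta : bool -> d.-tuple R -> R) (t : R) : R :=
  PXgivenA P true [set x | 1/2 + t / (2 * pA P true) < eta true x]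
  - PXgivenA P false [set x | 1/2 - t / (2 * pA P false) <= eta false x].

Definition Dplus {R : realType} {d : nat} (P : probability (obs R d) R)
  (eta : bool -> d.-tuple R -> R) (t : R) : R :=
  PXgivenA P true [set x | 1/2 + t / (2 * pA P true) <= eta true x]
  - PXgivenA P false [set x | 1/2 - t / (2 * pA P false) < eta false x].

Definition iid_sample {R : realType} {d : nat} {dO : measure_display}
  {Omega : measurableType dO} (Q : probability Omega R)
  (P : probability (obs R d) R) (n : nat) (Z : 'I_n -> Omega -> obs R d) : Prop :=
  (forall i, measurable_fun setT (Z i)) /\
  (forall i (B : set (obs R d)), measurable B -> Q (Z i @^-1` B) = P B) /\
  (forall B : 'I_n -> set (obs R d), (forall i, measurable (B i)) ->
     Q (\bigcap_(i in [set: 'I_n]) (Z i @^-1` B i)) =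
     (\prod_(i < n) fine (Q (Z i @^-1` B i)))%:E).

(* (1/n_a) * #{ j : A_j = a and F_j }, with an empty average equal to 0,
   where n_a = #{ j : A_j = a }. *)
Definition group_avg {R : realType} (n : nat) (A : 'I_n -> bool) (a : bool)
  (F : 'I_n -> bool) : R :=
  let na := #|[set i | A i == a]| in
  if na == 0%N then 0
  else (\sum_(i < n | A i == a) (F i)%:R) / na%:R.

Definition Dn_minus {R : realType} {d : nat} {dO : measure_display}
  {Omega : measurableType dO} (P : probability (obs R d) R)
  (eta : bool -> d.-tuple R -> R) (n : nat) (Z : 'I_n -> Omega -> obs R d)
  (t : R) (w : Omega) : R :=
  group_avg (fun i => grp (Z i w)) true
    (fun i => 1/2 + t / (2 * pA P true) < eta true (feat (Z i w)))
  - group_avg (fun i => grp (Z i w)) false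
    (fun i => 1/2 - t / (2 * pA P false) <= eta false (feat (Z i w))).

Definition Dn_plus {R : realType} {d : nat} {dO : measure_display}
  {Omega : measurableType dO} (P : probability (obs R d) R)
  (eta : bool -> d.-tuple R -> R) (n : nat) (Z : 'I_n -> Omega -> obs R d)
  (t : R) (w : Omega) : R :=
  group_avg (fun i => grp (Z i w)) true
    (fun i => 1/2 + t / (2 * pA P true) <= eta true (feat (Z i w)))
  - group_avg (fun i => grp (Z i w)) false
    (fun i => 1/2 - t / (2 * pA P false) < eta false (feat (Z i w))).

From HB Require Import structures.
From mathcomp Require Import all_boot all_order all_algebra.
From mathcomp Require Import all_classical all_reals all_analysis.
From mathcomp Require Import ring lra measurable_realfun.
Set Implicit Arguments.
Unset Strict Implicit.
Unset Printing Implicit Defensive.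
Import Order.TTheory GRing.Theory Num.Theory.
Local Open Scope classical_set_scope.
Local Open Scope ring_scope.

(* Fix a group a and a Boolean statistic F of an observation, with conditional
   probability q = P(F | A = a).  The empirical frequency of F in group a exceeds
   q + e exactly when the sum over the sample of 1{A_i = a} (1{F_i} - q - e) is
   nonnegative, and Chernoff's bound with parameter 2e bounds the probability of
   this by (1 - p_a e^2)^n <= exp(-n p_a e^2), thanks to an elementary estimate of
   the Bernoulli moment generating function valid for e <= 1/4.  Falling below
   q - e is the same event for the complement of F, and an empty group lies in
   both events.  A deviation eps of D_n(t) from D(t) forces a deviation eps/2 in
   one of the two groups, which gives four exponential terms; the hypothesis on
   eps together with p_0 + p_1 = 1 guarantees eps/2 <= 1/4.
   As every event only depends on finitely many Boolean statistics of each
   observation, its probability is a finite sum over the profiles of these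
   statistics, over which independence makes the Chernoff sum factorize. *)

Section RealInequalities.
Variable R : realType.

(* Since e^(x/4) <= 1/(1 - x/4), it suffices that 1 <= (1 + x + 4/5 x^2)(1 - x/4)^4. *)
Lemma expR_le_quadratic (x : R) : -(5/8) <= x <= 3/8 ->
  expR x <= 1 + x + 4/5 * x ^+ 2.
Proof.
move=> /andP[xlo xhi].
have u4_gt0 : 0 < (1 - x/4) ^+ 4 by rewrite exprn_gt0 //; lra.
have quartic : 1 <= (1 + x + 4/5 * x ^+ 2) * (1 - x/4) ^+ 4 by nra.
have eu_le1 : expR (x/4) * (1 - x/4) <= 1.
  rewrite -[leRHS](expR0 R) -(subrr (x/4)) expRD ler_wpM2l ?expR_ge0 //.
  by have := expR_ge1Dx (- (x/4)); lra.
have ex_le : expR x * (1 - x/4) ^+ 4 <= 1.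
  rewrite -[x in expR x](divfK (_ : 4 != 0)) // expRM_natr -exprMn.
  by apply: exprn_ile1 => //; rewrite mulr_ge0 ?expR_ge0 //; lra.
by rewrite -(ler_pM2r u4_gt0); apply: le_trans quartic.
Qed.

(* The moment generating function at 2e of B - q - e, with B a Bernoulli(q)
   variable. *)
Lemma bernoulli_shifted_mgf_le (q e : R) : 0 <= q <= 1 -> 0 < e <= 1/4 ->
  q * expR (2 * e * (1 - q - e)) + (1 - q) * expR (- (2 * e * (q + e)))
  <= 1 - e ^+ 2.
Proof.
move=> /andP[q0 q1] /andP[e0 e1].
have up : expR (2 * e * (1 - q - e)) <=
    1 + 2 * e * (1 - q - e) + 4/5 * (2 * e * (1 - q - e)) ^+ 2.
  by apply: expR_le_quadratic; apply/andP; split; nra.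
have lo : expR (- (2 * e * (q + e))) <=
    1 + - (2 * e * (q + e)) + 4/5 * (- (2 * e * (q + e))) ^+ 2.
  by apply: expR_le_quadratic; apply/andP; split; clear up; nra.
apply: le_trans (lerD (ler_wpM2l q0 up) (ler_wpM2l _ lo)) _; first lra.
rewrite [leLHS](_ : _ = 1 - 2 * e ^+ 2 + 16/5 * (e ^+ 2 * (q * (1 - q)) + e ^+ 2 * e ^+ 2));
  last by ring.
have e2_ge0 : 0 <= e ^+ 2 by rewrite sqr_ge0.
have var_le : q * (1 - q) <= 1/4 by have := sqr_ge0 (q - 1/2); rewrite expr2; nra.
have e2_le : e ^+ 2 <= 1/16 by nra.
have : e ^+ 2 * (q * (1 - q)) <= e ^+ 2 / 4 by nra.
have : e ^+ 2 * e ^+ 2 <= e ^+ 2 / 16 by nra.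
lra.
Qed.

Lemma exprn_le_expR (n : nat) (x : R) : 0 <= x <= 1 ->
  (1 - x) ^+ n <= expR (- (n%:R * x)).
Proof.
move=> /andP[x0 x1]; rewrite -mulrN expRM_natl.
apply: lerXn2r; rewrite ?nnegrE ?expR_ge0 //; first lra.
by have := expR_ge1Dx (- x); lra.
Qed.

End RealInequalities.

Section GroupAverage.
Variables (R : realType) (n : nat) (A : 'I_n -> bool) (a : bool).

Lemma mem_group_set i : (i \in [set i | A i == a]) = (A i == a).
Proof. by rewrite /in_mem /= /in_set asboolb. Qed.

Lemma sum_group_const (c : R) :
  \sum_(i < n | A i == a) c = c * #|[set i | A i == a]|%:R.
Proof.
rewrite (eq_bigl (mem [set i | A i == a])) ?sumr_const ?mulr_natr //.
by move=> i; rewrite inE mem_group_set.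
Qed.

(* For an empty group both sums vanish, so the first disjunct holds. *)
Lemma group_avg_deviation (F : 'I_n -> bool) (q e : R) :
  e < `|group_avg A a F - q| ->
  0 <= \sum_(i < n | A i == a) ((F i)%:R - (q + e)) \/
  0 <= \sum_(i < n | A i == a) ((~~ F i)%:R - ((1 - q) + e)).
Proof.
rewrite /group_avg /= !sumrB !sum_group_const.
set m := #|[set i | A i == a]|; set S := \sum_(i < n | A i == a) (F i)%:R.
have -> : \sum_(i < n | A i == a) (~~ F i)%:R = m%:R - S :> R.
  rewrite -[m%:R]mul1r -sum_group_const -sumrB.
  by apply: eq_bigr => i _; case: (F i); rewrite /= ?subrr ?subr0.
have [m0|m_gt0] := eqVneq m 0%N.
  have S0 : S = 0.
    rewrite /S big_pred0 // => i; apply/negbTE/negP => Ai.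
    by have := card0_eq m0 i; rewrite inE mem_group_set Ai.
  by rewrite S0 m0 !mulr0 !subrr; left.
have m_pos : 0 < m%:R :> R by rewrite ltr0n lt0n.
have [dev_ge0|dev_lt0] := lerP 0 (S / m%:R - q).
- rewrite ger0_norm // -(ltr_pM2r m_pos) mulrBl divfK ?gt_eqF // => dev; left; lra.
- rewrite ltr0_norm // -(ltr_pM2r m_pos) opprB mulrBl divfK ?gt_eqF // => dev; right; lra.
Qed.

End GroupAverage.

Lemma deviation_diff_split (R : realType) (x1 x0 q1 q0 e : R) :
  e < `|x1 - x0 - (q1 - q0)| -> e / 2 < `|x1 - q1| \/ e / 2 < `|x0 - q0|.
Proof.
have -> : x1 - x0 - (q1 - q0) = (x1 - q1) - (x0 - q0) by ring.
move=> /lt_le_trans/(_ (ler_normB _ _)).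
have [|] := ltrP (e / 2) `|x1 - q1|; first by left.
by have [|] := ltrP (e / 2) `|x0 - q0|; [right | lra].
Qed.

Lemma measurable_bool_preimage (dT : measure_display) (T : measurableType dT)
  (f : T -> bool) (B : set bool) : measurable_fun setT f -> measurable (f @^-1` B).
Proof. by move=> mf; rewrite -[_ @^-1` _]setTI; apply: mf. Qed.

Lemma preimage_pair_set1 (T A B : Type) (f : T -> A) (g : T -> B) (x : A) (y : B) :
  (fun z => (f z, g z)) @^-1` [set (x, y)] = f @^-1` [set x] `&` g @^-1` [set y].
Proof. by apply/seteqP; split => z /= [-> ->]. Qed.

Lemma measurable_grp {R : realType} {d : nat} : measurable_fun setT (@grp R d).
Proof. exact: measurableT_comp measurable_snd measurable_fst. Qed.

Lemma measurable_feat {R : realType} {d : nat} : measurable_fun setT (@feat R d).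
Proof. exact: measurableT_comp measurable_fst measurable_fst. Qed.

Section Observations.
Variables (R : realType) (d : nat).
Local Notation T := (obs R d).

Lemma measurable_feat_ge (f : d.-tuple R -> R) (c : R) :
  measurable_fun setT f -> measurable_fun setT (fun z : T => c <= f (feat z)).
Proof.
move=> mf; apply: measurable_fun_ler; first exact: measurable_cst.
exact: measurableT_comp mf measurable_feat.
Qed.

Lemma measurable_feat_gt (f : d.-tuple R -> R) (c : R) :
  measurable_fun setT f -> measurable_fun setT (fun z : T => c < f (feat z)).
Proof.
move=> mf; apply: measurable_fun_ltr; first exact: measurable_cst.
exact: measurableT_comp mf measurable_feat.
Qed.

Variable P : probability T R.

Lemma fine_measure_bool_split (A : set T) (f : T -> bool) :
  measurable A -> measurable_fun setT f ->
  fine (P (A `&` f @^-1` [set true])) + fine (P (A `&` f @^-1` [set false])) =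
  fine (P A).
Proof.
move=> mA mf; have mft := measurable_bool_preimage [set true] mf.
have -> : A `&` f @^-1` [set false] = A `\` f @^-1` [set true].
  by apply/seteqP; split => z /= [Az]; case: (f z).
rewrite (measureDI P mA mft) fineD; first by rewrite addrC.
- exact/fin_num_measure/measurableD.
- exact/fin_num_measure/measurableI.
Qed.

Lemma pA_ge0 a : 0 <= pA P a.
Proof. exact/fine_ge0/measure_ge0. Qed.

Lemma pA_addN a : pA P a + pA P (~~ a) = 1.
Proof.
have := fine_measure_bool_split measurableT measurable_grp.
rewrite !setTI probability_setT => pA_split.
by case: a => /=; [exact: pA_split | rewrite addrC; exact: pA_split].
Qed.

(* PXgivenA P a E is convertible to cond_prob (fun z => E (feat z)) a. *)
Definition cond_prob (F : T -> bool) (a : bool) : R :=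
  fine (P [set z | F z /\ grp z = a]) / pA P a.

Section CondProb.
Variables (F : T -> bool) (a : bool).
Hypotheses (mF : measurable_fun setT F) (pA_gt0 : 0 < pA P a).

Lemma fine_measure_grp_true :
  fine (P (grp @^-1` [set a] `&` F @^-1` [set true])) = pA P a * cond_prob F a.
Proof.
rewrite /cond_prob mulrC divfK ?gt_eqF // setIC.
by congr (fine (P _)); apply/seteqP; split => z.
Qed.

Lemma fine_measure_grp_false :
  fine (P (grp @^-1` [set a] `&` F @^-1` [set false])) = pA P a * (1 - cond_prob F a).
Proof.
have pA_split : pA P a * cond_prob F a +
    fine (P (grp @^-1` [set a] `&` F @^-1` [set false])) = pA P a.
  rewrite -fine_measure_grp_true.
  exact: fine_measure_bool_split (measurable_bool_preimage _ measurable_grp) mF.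
by rewrite mulrBr mulr1 -{1}pA_split addrC addKr.
Qed.

Lemma cond_prob_ge0_le1 : 0 <= cond_prob F a <= 1.
Proof.
have : 0 <= cond_prob F a.
  rewrite -(pmulr_rge0 _ pA_gt0) -fine_measure_grp_true.
  exact/fine_ge0/measure_ge0.
have : 0 <= 1 - cond_prob F a.
  rewrite -(pmulr_rge0 _ pA_gt0) -fine_measure_grp_false.
  exact/fine_ge0/measure_ge0.
by move=> ? ?; apply/andP; split; lra.
Qed.

Lemma cond_probN : cond_prob (fun z => ~~ F z) a = 1 - cond_prob F a.
Proof.
rewrite -[RHS](mulKf (lt0r_neq0 pA_gt0)) -fine_measure_grp_false [RHS]mulrC.
rewrite /cond_prob; congr (fine (P _) / _); apply/seteqP; split => z /= [].
  by move/negbTE.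
by move=> -> ->.
Qed.

End CondProb.

End Observations.

Section IidSample.
Variables (R : realType) (d : nat) (P : probability (obs R d) R)
  (dO : measure_display) (Omega : measurableType dO) (Q : probability Omega R)
  (n : nat) (Z : 'I_n -> Omega -> obs R d).
Hypothesis Ziid : iid_sample Q P Z.
Local Notation T := (obs R d).

Lemma measurable_sample_preimage i (B : set T) : measurable B -> measurable (Z i @^-1` B).
Proof. by case: Ziid => mZ _ mB; rewrite -[_ @^-1` _]setTI; apply: mZ. Qed.

Section Profiles.
Variables (K : finType) (tau : T -> K).
Hypothesis measurable_fiber : forall k, measurable (tau @^-1` [set k]).

Definition profile (w : Omega) : {ffun 'I_n -> K} := [ffun i => tau (Z i w)].

Definition fiber_prob (k : K) : R := fine (P (tau @^-1` [set k])).

Lemma fiber_prob_ge0 k : 0 <= fiber_prob k.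
Proof. exact/fine_ge0/measure_ge0. Qed.

Lemma profile_cellE k :
  [set w | profile w = k] = \bigcap_(i in [set: 'I_n]) (Z i @^-1` (tau @^-1` [set k i])).
Proof.
apply/seteqP; split => w /=; first by move=> <- i _; rewrite /= ffunE.
by move=> wk; apply/ffunP => i; rewrite ffunE; exact: wk.
Qed.

Lemma measurable_profile_cell k : measurable [set w | profile w = k].
Proof.
rewrite profile_cellE; apply: fin_bigcap_measurable; first exact: finite_finset.
by move=> i _; exact: measurable_sample_preimage.
Qed.

Lemma profile_cell_prob k :
  Q [set w | profile w = k] = (\prod_(i < n) fiber_prob (k i))%:E.
Proof.
case: Ziid => _ [law indep]; rewrite profile_cellE indep //.
by congr (_%:E); apply: eq_bigr => i _; rewrite law.
Qed.

Lemma measure_profile_cells (r : seq {ffun 'I_n -> K}) (G : pred {ffun 'I_n -> K}) :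
  uniq r -> Q (\big[setU/set0]_(k <- r | G k) [set w | profile w = k]) =
  (\sum_(k <- r | G k) Q [set w | profile w = k])%E.
Proof.
elim: r => [|k r IH]; first by rewrite !big_nil measure0.
move=> /= /andP[k_notin_r r_uniq]; rewrite !big_cons; case: (G k); last exact: IH.
rewrite measureU.
- by rewrite -(IH r_uniq).
- exact: measurable_profile_cell.
- by apply: bigsetU_measurable => k' _; exact: measurable_profile_cell.
apply/seteqP; split => // w [/= wk]; rewrite -bigcup_seq_cond => -[k' /= /andP[k'r _]].
by move=> wk'; move: k_notin_r; rewrite -wk wk' k'r.
Qed.

Lemma profile_eventE (G : pred {ffun 'I_n -> K}) :
  [set w | G (profile w)] =
  \big[setU/set0]_(k <- index_enum {ffun 'I_n -> K} | G k) [set w | profile w = k].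
Proof.
rewrite -bigcup_seq_cond; apply/seteqP; split => w /=.
  by move=> Gw; exists (profile w); rewrite /= ?mem_index_enum.
by move=> [k /= /andP[_ Gk] ->].
Qed.

Lemma measurable_profile_event (G : pred {ffun 'I_n -> K}) :
  measurable [set w | G (profile w)].
Proof.
by rewrite profile_eventE; apply: bigsetU_measurable => k _; exact: measurable_profile_cell.
Qed.

Lemma profile_event_prob (G : pred {ffun 'I_n -> K}) :
  Q [set w | G (profile w)] = (\sum_(k | G k) \prod_(i < n) fiber_prob (k i))%:E.
Proof.
rewrite profile_eventE measure_profile_cells ?index_enum_uniq // -sumEFin.
by apply: eq_bigr => k _; rewrite profile_cell_prob.
Qed.

(* Chernoff's bound: the indicator of the event is dominated by the product
   of the exp(lam * y (k i)), whose sum over all profiles factorizes. *)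
Lemma profile_chernoff (y : K -> R) (lam : R) : 0 <= lam ->
  (Q [set w | (0 <= \sum_(i < n) y (profile w i))%R] <=
   ((\sum_k fiber_prob k * expR (lam * y k)) ^+ n)%:E)%E.
Proof.
move=> lam_ge0.
rewrite (profile_event_prob (fun k => 0 <= \sum_(i < n) y (k i))) lee_fin.
rewrite -[n in _ ^+ n]card_ord -prodr_const bigA_distr_bigA /=.
rewrite [leRHS](bigID (fun k : {ffun 'I_n -> K} => 0 <= \sum_(i < n) y (k i))) /=.
rewrite -[leLHS]addr0; apply: lerD; last first.
  apply: sumr_ge0 => k _; apply: prodr_ge0 => i _.
  by rewrite mulr_ge0 ?fiber_prob_ge0 ?expR_ge0.
apply: ler_sum => k k_event; rewrite big_split /= -expR_sum.
rewrite -[leLHS]mulr1 ler_wpM2l //; first by apply: prodr_ge0 => i _; exact: fiber_prob_ge0.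
by rewrite -expR0 ler_expR -mulr_sumr mulr_ge0.
Qed.

End Profiles.

Section GroupTail.
Variables (F : T -> bool) (a : bool).
Hypotheses (mF : measurable_fun setT F) (pA_gt0 : 0 < pA P a).
Local Notation q := (cond_prob P F a).

Definition upper_dev_event (e : R) : set Omega :=
  [set w | (0 <= \sum_(i < n | grp (Z i w) == a) ((F (Z i w))%:R - (q + e)))%R].

Let group_type (z : T) : bool * bool := (grp z, F z).

Let excess (e : R) (k : bool * bool) : R := if k.1 == a then k.2%:R - (q + e) else 0.

Lemma measurable_group_type_fiber k : measurable (group_type @^-1` [set k]).
Proof.
case: k => g s; rewrite preimage_pair_set1.
by apply: measurableI; rewrite -[_ @^-1` _]setTI; [apply: measurable_grp | apply: mF].
Qed.

Lemma upper_dev_eventE e :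
  upper_dev_event e = [set w | (0 <= \sum_(i < n) excess e (profile group_type w i))%R].
Proof.
have sumE w : \sum_(i < n | grp (Z i w) == a) ((F (Z i w))%:R - (q + e)) =
    \sum_(i < n) excess e (profile group_type w i).
  by rewrite big_mkcond; apply: eq_bigr => i _; rewrite ffunE.
by rewrite /upper_dev_event; apply/seteqP; split => w /=; rewrite sumE.
Qed.

Lemma measurable_upper_dev_event e : measurable (upper_dev_event e).
Proof.
rewrite upper_dev_eventE.
exact: measurable_profile_event measurable_group_type_fiber
  (fun k => 0 <= \sum_(i < n) excess e (k i)).
Qed.


Lemma group_type_mgf (e lam : R) :
  \sum_k fiber_prob group_type k * expR (lam * excess e k) =
  (1 - pA P a) + pA P a *
    (q * expR (lam * (1 - (q + e))) + (1 - q) * expR (lam * (0 - (q + e)))).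
Proof.
pose f g s := fiber_prob group_type (g, s) * expR (lam * excess e (g, s)).
rewrite (eq_bigr (fun k => f k.1 k.2)); last by case.
rewrite -(pair_bigA _ f) (bigD1 a) //= big_bool /f /excess /= eqxx.
rewrite /fiber_prob !preimage_pair_set1 fine_measure_grp_true ?fine_measure_grp_false //.
rewrite (big_pred1 (~~ a)); last by move=> g; case: g; case: a.
rewrite (_ : (~~ a == a) = false); last by case: a.
rewrite big_bool /= !mulr0 expR0 !mulr1 !preimage_pair_set1.
rewrite (fine_measure_bool_split P (measurable_bool_preimage _ measurable_grp) mF).
rewrite -[fine _]/(pA P (~~ a)) -(pA_addN P a); ring.
Qed.

Lemma upper_dev_event_le e : 0 < e <= 1/4 ->
  (Q (upper_dev_event e) <= (expR (- (n%:R * (pA P a * e ^+ 2))))%:E)%E.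
Proof.
move=> e_range; have q_range := cond_prob_ge0_le1 mF pA_gt0.
have /andP[e_gt0 e_le] := e_range.
have pA_le1 : pA P a <= 1 by have := pA_addN P a; have := pA_ge0 P (~~ a); lra.
have e2_le1 : e ^+ 2 <= 1 by rewrite exprn_ile1 // ?ltW //; lra.
have pe2_range : 0 <= pA P a * e ^+ 2 <= 1.
  apply/andP; split; first exact: mulr_ge0 (pA_ge0 P a) (sqr_ge0 e).
  exact: mulr_ile1 (pA_ge0 P a) (sqr_ge0 e) pA_le1 e2_le1.
have mgf_le : q * expR (2 * e * (1 - (q + e))) + (1 - q) * expR (2 * e * (0 - (q + e)))
    <= 1 - e ^+ 2.
  have -> : 1 - (q + e) = 1 - q - e by ring.
  have -> : 0 - (q + e) = - (q + e) by ring.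
  by rewrite mulrN; exact: bernoulli_shifted_mgf_le.
rewrite upper_dev_eventE.
have lam_ge0 : 0 <= 2 * e by rewrite mulr_ge0 // ltW.
apply: le_trans (profile_chernoff measurable_group_type_fiber (excess e) lam_ge0) _.
rewrite lee_fin group_type_mgf; apply: le_trans (exprn_le_expR n pe2_range).
apply: lerXn2r; rewrite ?nnegrE.
- apply: addr_ge0; first lra.
  by rewrite mulr_ge0 ?pA_ge0 // addr_ge0 // mulr_ge0 ?expR_ge0 //; lra.
- lra.
- by have := ler_wpM2l (pA_ge0 P a) mgf_le; lra.
Qed.

End GroupTail.

Definition sample_frac (F : T -> bool) (a : bool) (w : Omega) : R :=
  group_avg (fun i => grp (Z i w)) a (fun i => F (Z i w)).

Lemma sample_frac_dev_subset (F : T -> bool) (a : bool) (e : R) :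
  measurable_fun setT F -> 0 < pA P a ->
  [set w | e < `|sample_frac F a w - cond_prob P F a|] `<=`
  upper_dev_event F a e `|` upper_dev_event (fun z => ~~ F z) a e.
Proof.
move=> mF pA_gt0 w /group_avg_deviation[dev|dev]; [left | right] => //.
by rewrite /upper_dev_event /= cond_probN.
Qed.

Lemma measurable_sample_frac_event (F1 F0 : T -> bool) (G : R -> R -> bool) :
  measurable_fun setT F1 -> measurable_fun setT F0 ->
  measurable [set w | G (sample_frac F1 true w) (sample_frac F0 false w)].
Proof.
move=> mF1 mF0; pose tau z := (grp z, (F1 z, F0 z)).
have mtau k : measurable (tau @^-1` [set k]).
  case: k => g [s1 s0]; rewrite /tau !preimage_pair_set1.
  apply: measurableI; first by rewrite -[_ @^-1` _]setTI; apply: measurable_grp.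
  by apply: measurableI; rewrite -[_ @^-1` _]setTI; [apply: mF1 | apply: mF0].
have frac1 w : sample_frac F1 true w =
    group_avg (fun i => (profile tau w i).1) true (fun i => (profile tau w i).2.1).
  by rewrite /sample_frac; congr group_avg; apply: funext => i; rewrite ffunE.
have frac0 w : sample_frac F0 false w =
    group_avg (fun i => (profile tau w i).1) false (fun i => (profile tau w i).2.2).
  by rewrite /sample_frac; congr group_avg; apply: funext => i; rewrite ffunE.
pose G' (k : {ffun 'I_n -> bool * (bool * bool)}) :=
  G (group_avg (fun i => (k i).1) true (fun i => (k i).2.1))
    (group_avg (fun i => (k i).1) false (fun i => (k i).2.2)).
have -> : [set w | G (sample_frac F1 true w) (sample_frac F0 false w)] =
    [set w | G' (profile tau w)].
  by apply/seteqP; split => w /=; rewrite frac1 frac0.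
exact: measurable_profile_event mtau G'.
Qed.

Lemma two_group_dev_le (F1 F0 : T -> bool) (e : R) :
  measurable_fun setT F1 -> measurable_fun setT F0 ->
  0 < pA P true -> 0 < pA P false -> 0 < e <= 1/2 ->
  (Q [set w | (e < `|sample_frac F1 true w - sample_frac F0 false w
                     - (cond_prob P F1 true - cond_prob P F0 false)|)%R]
   <= (4 * expR (- (n%:R * Num.min (pA P true) (pA P false) * e ^+ 2) / 4))%:E)%E.
Proof.
move=> mF1 mF0 p1_gt0 p0_gt0 /andP[e_gt0 e_le].
set m := Num.min _ _; set bound := expR _.
have m_le a : m <= pA P a by case: a; rewrite ge_min lexx ?orbT.
have tail F a : measurable_fun setT F -> 0 < pA P a ->
    (Q (upper_dev_event F a (e / 2)) <= bound%:E)%E.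
  move=> mF pa; apply: le_trans (upper_dev_event_le mF pa _) _.
    by apply/andP; split; lra.
  rewrite lee_fin ler_expR (_ : - _ / 4 = - (n%:R * (m * (e / 2) ^+ 2))); last by field.
  by rewrite lerN2 ler_wpM2l // ler_wpM2r ?sqr_ge0.
pose U F a := upper_dev_event F a (e / 2) `|` upper_dev_event (fun z => ~~ F z) a (e / 2).
have mU F a : measurable_fun setT F -> measurable (U F a).
  move=> mF; apply: measurableU; apply: measurable_upper_dev_event => //.
  exact: measurable_neg.
have U_le F a : measurable_fun setT F -> 0 < pA P a -> (Q (U F a) <= (2 * bound)%:E)%E.
  move=> mF pa; have mnF := measurable_neg mF.
  apply: le_trans (measureU2 _ (measurable_upper_dev_event _ mF _)
    (measurable_upper_dev_event _ mnF _)) _.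
  by rewrite mulr_natl mulr2n EFinD; apply: leeD; apply: tail.
have sub : [set w | e < `|sample_frac F1 true w - sample_frac F0 false w
                    - (cond_prob P F1 true - cond_prob P F0 false)|] `<=`
    U F1 true `|` U F0 false.
  move=> w /deviation_diff_split[dev|dev]; [left | right];
    exact: sample_frac_dev_subset.
apply: le_trans (le_measure _ _ _ sub) _; rewrite ?inE.
- exact: (measurable_sample_frac_event (fun x1 x0 => e < `|x1 - x0 - _|) mF1 mF0).
- exact: measurableU (mU _ _ mF1) (mU _ _ mF0).
apply: le_trans (measureU2 _ (mU _ _ mF1) (mU _ _ mF0)) _.
rewrite (_ : 4 * bound = 2 * bound + 2 * bound) ?EFinD; last by ring.
exact: leeD (U_le _ _ mF1 p1_gt0) (U_le _ _ mF0 p0_gt0).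
Qed.

End IidSample.

Theorem lemmaC7 (R : realType) (d : nat)
  (P : probability (obs R d) R) (eta : bool -> d.-tuple R -> R)
  (dO : measure_display) (Omega : measurableType dO) (Q : probability Omega R)
  (n : nat) (Z : 'I_n -> Omega -> obs R d) :
  is_regression_fun P eta ->
  iid_sample Q P Z ->
  0 < pA P false -> 0 < pA P true ->
  forall (t eps : R),
  0 < eps -> eps <= Num.sqrt (Num.min (pA P true) (pA P false) / 2) ->
  (maxe (Q [set w | (eps < `|Dn_plus P eta Z t w - Dplus P eta t|)%R])
        (Q [set w | (eps < `|Dn_minus P eta Z t w - Dminus P eta t|)%R])
   <= (8 * expR (- (n%:R * Num.min (pA P true) (pA P false) * eps ^+ 2) / 4))%R%:E)%E.
Proof.
move=> eta_reg Ziid p0_gt0 p1_gt0 t eps eps_gt0 eps_le.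
set m := Num.min _ _ in eps_le *.
have m_le_half : m <= 1/2.
  have m1 : m <= pA P true by rewrite /m ge_min lexx.
  have m0 : m <= pA P false by rewrite /m ge_min lexx orbT.
  by have := pA_addN P true; rewrite /=; lra.
have eps_range : 0 < eps <= 1/2.
  have m_ge0 : 0 <= m / 2 by rewrite divr_ge0 // le_min !ltW.
  have := ler_pM (ltW eps_gt0) (ltW eps_gt0) eps_le eps_le.
  rewrite -!expr2 sqr_sqrtr // => eps2_le.
  by apply/andP; split => //; nra.
have [meas1 _] := eta_reg true; have [meas0 _] := eta_reg false.
set bound := expR _.
have four_le_eight : ((4 * bound)%:E <= (8 * bound)%:E)%E.
  by rewrite lee_fin; have : 0 <= bound := expR_ge0 _; lra.
pose c1 := 1/2 + t / (2 * pA P true); pose c0 := 1/2 - t / (2 * pA P false).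
rewrite ge_max; apply/andP; split; apply: le_trans four_le_eight.
- exact (two_group_dev_le Ziid (measurable_feat_ge c1 meas1) (measurable_feat_gt c0 meas0)
    p1_gt0 p0_gt0 eps_range).
- exact (two_group_dev_le Ziid (measurable_feat_gt c1 meas1) (measurable_feat_ge c0 meas0)
    p1_gt0 p0_gt0 eps_range).
Qed.
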